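(* Let $\mathcal{M}=(\Sigma,\Gamma,\mathcal{H},U,M)$ be a QMM with $n=\dim\mathcal{H}$ and $\rho$ a Hermitian operator on $\mathcal{H}$. Then $\operatorname{span}\mathfrak{D}(\rho,m)\subseteq\operatorname{span}\mathfrak{D}(\rho,n^2-1)$ for every $m\in\mathbb{N}$.
   Context: A quantum Mealy machine (QMM) is a tuple $\mathcal{M}=(\Sigma,\Gamma,\mathcal{H},U,M)$ where $\Sigma,\Gamma$ are finite alphabets, $\mathcal{H}$ a finite-dimensional complex Hilbert space, $U=\{U_\sigma\}_{\sigma\in\Sigma}$ unitary operators on $\mathcal{H}$, $M=\{M_\gamma\}_{\gamma\in\Gamma}$ linear operators with $\sum_\gamma M_\gamma^\dagger M_\gamma=I$. For a word $a$, $|a|$ is its length, $a[l:r]=a[l]\cdots a[r]$ (empty if $l>r$), $U_a=U_{a[|a|]}\cdots U_{a[1]}$, $U_\epsilon=I$. A scheduler for $a\in\Sigma^*$ is a finite non-decreasing integer sequence $\mathcal{S}=(s_1\le\dots\le s_{|\mathcal{S}|})$ in $\{0,\dots,|a|\}$ (possibly empty); $\mathfrak{S}_a$ is the set of schedulers for $a$. With $s_0=0$, $s_{|\mathcal{S}|+1}=|a|$, $a_i=a[s_{i-1}+1:s_i]$. For $b\in\Gamma^{|\mathcal{S}|}$, $V_{b|a,\mathcal{S}}=U_{a_{|\mathcal{S}|+1}}M_{b_{|\mathcal{S}|}}U_{a_{|\mathcal{S}|}}\cdots M_{b_1}U_{a_1}$ and $\rho^{\mathcal{M}}_{b|a,\mathcal{S}}=V_{b|a,\mathcal{S}}\rho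 V_{b|a,\mathcal{S}}^\dagger$. For Hermitian $\rho$ and $m\in\mathbb{N}$, $\mathfrak{D}(\rho,m)=\{\rho^{\mathcal{M}}_{b|a,\mathcal{S}}:a\in\Sigma^*,\mathcal{S}\in\mathfrak{S}_a,b\in\Gamma^{|\mathcal{S}|},|a|+|\mathcal{S}|\le m\}$; spans are complex linear spans. *)

(* Complex scalars: an arbitrary numClosedFieldType C
   (algebraically closed field with conjugation, e.g. algC). *)
From HB Require Import structures.
From mathcomp Require Import all_boot all_order all_algebra.
Set Implicit Arguments. Unset Strict Implicit. Unset Printing Implicit Defensive.
Import Order.TTheory GRing.Theory Num.Theory.
Local Open Scope ring_scope.

Section QMM.
Variable C : numClosedFieldType.
Variable n : nat.

Definition adjmx (A : 'M[C]_n) : 'M[C]_n := (map_mx Num.conj A)^T.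

Definition unitary_op (A : 'M[C]_n) : Prop :=
  adjmx A *m A = 1%:M /\ A *m adjmx A = 1%:M.

Definition hermitian_op (A : 'M[C]_n) : Prop := adjmx A = A.

Variables (Sigma Gamma : finType).
Variable U : Sigma -> 'M[C]_n.
Variable M : Gamma -> 'M[C]_n.

(* U_a = U_{a[|a|]} ... U_{a[1]}, U_eps = I *)
Definition Uword (a : seq Sigma) : 'M[C]_n :=
  foldr (fun s acc => acc *m U s) 1%:M a.

(* a[l+1 : r] (1-indexed) = drop l (take r a) *)
Definition segment (a : seq Sigma) (l r : nat) : seq Sigma := drop l (take r a).

Definition scheduler (a : seq Sigma) (S : seq nat) : bool :=
  sorted leq S && all (fun s => s <= size a)%N S.

(* V_{b|a,S} = U_{a_{k+1}} M_{b_k} U_{a_k} ... M_{b_1} U_{a_1}, prev = s_{i-1} *)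
Fixpoint Vrec (a : seq Sigma) (prev : nat) (S : seq nat) (b : seq Gamma)
  : 'M[C]_n :=
  match S, b with
  | s :: S', g :: b' => Vrec a s S' b' *m M g *m Uword (segment a prev s)
  | _, _ => Uword (drop prev a)
  end.

Definition Vop (a : seq Sigma) (S : seq nat) (b : seq Gamma) : 'M[C]_n :=
  Vrec a 0 S b.

Definition inD (rho : 'M[C]_n) (m : nat) (X : 'M[C]_n) : Prop :=
  exists (a : seq Sigma) (S : seq nat) (b : seq Gamma),
    [/\ scheduler a S, size b = size S, (size a + size S <= m)%N &
        X = Vop a S b *m rho *m adjmx (Vop a S b)].

End QMM.

Definition in_span (C : numClosedFieldType) (n : nat)
  (P : 'M[C]_n -> Prop) (X : 'M[C]_n) : Prop :=
  exists (k : nat) (f : 'I_k -> 'M[C]_n) (c : 'I_k -> C),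
    (forall i, P (f i)) /\ X = \sum_(i < k) c i *: f i.

From HB Require Import structures.
From mathcomp Require Import all_boot all_order all_algebra zify.
Set Implicit Arguments. Unset Strict Implicit. Unset Printing Implicit Defensive.
Import Order.TTheory GRing.Theory Num.Theory.
Local Open Scope ring_scope.

(* 1. Scheduled runs are words.  Read as a word over the alphabet
      Sigma + Gamma (an input letter contributes U_s, an output letter M_g),
      every operator V_{b|a,S} is the product of the letters of a word of
      length |a| + |S|, and conversely every word arises this way.  Hence
      D(rho, k) is exactly the set of conjugates w . rho := A_w rho A_w^*
      of rho by words w of length at most k.
   2. Let W_k be the span of these conjugates.  The W_k form an increasing
      chain of subspaces of the n^2-dimensional space of n x n matrices,
      and W_{k+1} = span(rho, A_o W_k A_o^* : o a letter), so W_{k+1} only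
      depends on W_k: once the chain has a plateau it is constant.
   3. An abstract lemma on such chains: a plateau occurs at an index at most
      dim V - dim W_0, because the dimension grows strictly before.  For
      rho <> 0 this index is at most n^2 - 1; for rho = 0 all W_k are 0. *)

Lemma adjmxM (C : numClosedFieldType) (n : nat) (A B : 'M[C]_n) :
  adjmx (A *m B) = adjmx B *m adjmx A.
Proof. by rewrite /adjmx (map_mxM Num.conj) trmx_mul. Qed.

Lemma adjmx1 (C : numClosedFieldType) (n : nat) : adjmx (1%:M : 'M[C]_n) = 1%:M.
Proof. by rewrite /adjmx map_mx1 ?rmorph1 // trmx1. Qed.

Section StabilisingChains.
Variables (K : fieldType) (vT : vectType K) (W : nat -> {vspace vT}).
Hypothesis W_incr : forall k, (W k <= W k.+1)%VS.
Hypothesis W_plateau : forall k, W k = W k.+1 -> W k.+1 = W k.+2.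

Lemma chain_mono k k' : (k <= k')%N -> (W k <= W k')%VS.
Proof.
move=> le_kk'; rewrite -(subnK le_kk').
elim: (k' - k)%N => [|i IH]; first by rewrite add0n.
by rewrite addSn; apply: subv_trans IH (W_incr _).
Qed.

Lemma chain_stable j : W j = W j.+1 -> forall m, (W m <= W j)%VS.
Proof.
move=> Wj m; case: (leqP m j) => [|/ltnW le_jm]; first exact: chain_mono.
have plateau i : W (i + j) = W (i + j).+1.
  by elim: i => [|i IH] //; rewrite addSn; apply: W_plateau.
have const i : W (i + j) = W j.
  by elim: i => [|i IH] //; rewrite addSn -plateau.
by rewrite -(subnK le_jm) const.
Qed.

(* Pigeonhole on dimensions: a plateau occurs early. *)
Lemma chain_early_plateau :
  exists2 j, (j <= \dim {: vT} - \dim (W 0))%N & W j = W j.+1.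
Proof.
set D := (\dim {: vT} - \dim (W 0))%N.
have [/existsP[j /eqP Wj]|] := boolP [exists j : 'I_D.+1, W j == W j.+1].
  by exists j; rewrite // -ltnS.
rewrite negb_exists => /forallP strict.
have grow k : (k <= D.+1)%N -> (\dim (W 0) + k <= \dim (W k))%N.
  elim: k => [|k IH lt_kD]; first by rewrite addn0.
  have := strict (Ordinal lt_kD); rewrite eqEdim W_incr /= -ltnNge => lt_dim.
  by rewrite addnS; apply: leq_ltn_trans (IH (ltnW lt_kD)) lt_dim.
have dimW0 := dimvS (subvf (W 0)).
have := leq_trans (grow _ (leqnn _)) (dimvS (subvf (W D.+1))).
by rewrite /D; lia.
Qed.

Lemma chain_bound m : (W m <= W (\dim {: vT} - \dim (W 0)))%VS.
Proof.
have [j le_jD Wj] := chain_early_plateau.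
exact: subv_trans (chain_stable Wj m) (chain_mono le_jD).
Qed.

End StabilisingChains.

Section Words.
Variables (C : numClosedFieldType) (n : nat) (Sigma Gamma : finType).
Variables (U : Sigma -> 'M[C]_n) (M : Gamma -> 'M[C]_n).

Definition letter (o : Sigma + Gamma) : 'M[C]_n :=
  match o with inl s => U s | inr g => M g end.

(* A_w = A_{w_1} ... A_{w_k}: the leftmost letter acts last. *)
Definition opmat (w : seq (Sigma + Gamma)) : 'M[C]_n :=
  foldr (fun o acc => letter o *m acc) 1%:M w.

Definition act (o : Sigma + Gamma) (X : 'M[C]_n) : 'M[C]_n :=
  letter o *m X *m adjmx (letter o).

Definition conjw (w : seq (Sigma + Gamma)) (X : 'M[C]_n) : 'M[C]_n :=
  foldr act X w.

Lemma opmat_cat w1 w2 : opmat (w1 ++ w2) = opmat w1 *m opmat w2.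
Proof. by elim: w1 => [|o w IH] /=; rewrite ?mul1mx // IH mulmxA. Qed.

Lemma opmat_rcons w o : opmat (rcons w o) = opmat w *m letter o.
Proof. by rewrite -cats1 opmat_cat /= mulmx1. Qed.

Lemma opmat_conj w X : opmat w *m X *m adjmx (opmat w) = conjw w X.
Proof.
elim: w => [|o w IH] /=; first by rewrite mul1mx adjmx1 mulmx1.
by rewrite adjmxM -IH /act !mulmxA.
Qed.

Lemma conjw0 w : conjw w 0 = 0.
Proof. by elim: w => [|o w IH] //=; rewrite IH /act mulmx0 mul0mx. Qed.

Definition input_letters (a : seq Sigma) : seq (Sigma + Gamma) :=
  rev (map inl a).

Lemma opmat_input a : opmat (input_letters a) = Uword U a.
Proof.
elim: a => [|x a IH] //.
by rewrite /input_letters map_cons rev_cons opmat_rcons IH.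
Qed.

Fixpoint run_word (a : seq Sigma) (p : nat) (S : seq nat) (b : seq Gamma)
  : seq (Sigma + Gamma) :=
  match S, b with
  | s :: S', g :: b' => run_word a s S' b' ++ inr g :: input_letters (segment a p s)
  | _, _ => input_letters (drop p a)
  end.

Lemma opmat_run_word a p S b : opmat (run_word a p S b) = Vrec U M a p S b.
Proof.
elim: S p b => [|s S IH] p [|g b] /=; rewrite ?opmat_input //.
by rewrite opmat_cat /= IH opmat_input !mulmxA.
Qed.

Lemma size_run_word a p S b :
  path leq p S -> all (fun s => s <= size a)%N S -> size b = size S ->
  size (run_word a p S b) = (size a - p + size S)%N.
Proof.
elim: S p b => [|s S IH] p [|g b] //=.
  by rewrite size_rev size_map size_drop addn0.
move=> /andP[le_ps path_S] /andP[le_sa all_S] [size_b].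
rewrite size_cat /= IH // size_rev size_map /segment size_drop size_take.
by case: ltnP => [_|le_as]; lia.
Qed.

Lemma inD_to_word rho k X :
  inD U M rho k X -> exists2 w, (size w <= k)%N & X = conjw w rho.
Proof.
move=> [a [S [b [/andP[sorted_S all_S] size_b le_k ->]]]].
have path_S : path leq 0 S by case: S sorted_S {all_S size_b le_k}.
exists (run_word a 0 S b); last by rewrite -opmat_conj /Vop opmat_run_word.
by rewrite size_run_word // subn0.
Qed.

(* Conversely, appending a letter to a word is realised by a scheduled run:
   an input letter is prepended to a (shifting the scheduler), an output
   letter is a measurement at time 0. *)
Lemma Vrec_shift x a p S b :
  Vrec U M (x :: a) p.+1 [seq i.+1 | i <- S] b = Vrec U M a p S b.
Proof. by elim: S p b => [|s S IH] p [|g b] //=; rewrite IH. Qed.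

Lemma Vop_input x a S b :
  Vop U M (x :: a) [seq i.+1 | i <- S] b = Vop U M a S b *m U x.
Proof.
rewrite /Vop; case: S b => [|s S] [|g b] //=; rewrite ?drop0 //.
by rewrite Vrec_shift /segment /= drop0 !mulmxA.
Qed.

Lemma Vop_measure a S b g :
  Vop U M a (0%N :: S) (g :: b) = Vop U M a S b *m M g.
Proof. by rewrite /Vop /= /segment take0 drop0 /Uword /= mulmx1. Qed.

Lemma word_to_run w : exists a S b, [/\ scheduler a S, size b = size S,
  (size a + size S)%N = size w & Vop U M a S b = opmat w].
Proof.
elim/last_ind: w => [|w o [a [S [b [/andP[sorted_S all_S] size_b size_w Vw]]]]].
  by exists [::], [::], [::].
rewrite size_rcons opmat_rcons; case: o => [x|g].
  exists (x :: a), [seq i.+1 | i <- S], b; split.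
  - by rewrite /scheduler sorted_map all_map sorted_S.
  - by rewrite size_map.
  - by rewrite size_map /= addSn size_w.
  - by rewrite Vop_input Vw.
exists a, (0%N :: S), (g :: b); split.
- by rewrite /scheduler /= all_S andbT; case: S sorted_S {all_S size_b size_w Vw}.
- by rewrite /= size_b.
- by rewrite /= addnS size_w.
- by rewrite Vop_measure Vw.
Qed.

Lemma inD_word rho k X :
  inD U M rho k X <-> exists2 w, (size w <= k)%N & X = conjw w rho.
Proof.
split; first exact: inD_to_word.
move=> [w le_wk ->]; have [a [S [b [sched size_b size_aS Vw]]]] := word_to_run w.
exists a, S, b; split => //; first by rewrite size_aS.
by rewrite Vw opmat_conj.
Qed.

End Words.

Section ReachableSpans.
Variables (C : numClosedFieldType) (n : nat) (Sigma Gamma : finType).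
Variables (U : Sigma -> 'M[C]_n) (M : Gamma -> 'M[C]_n) (rho : 'M[C]_n).

Local Notation act := (act U M).
Local Notation conjw := (conjw U M).

Fixpoint reach (k : nat) : seq 'M[C]_n :=
  if k is k'.+1 then rho :: [seq act o X | o <- enum {: Sigma + Gamma}, X <- reach k']
  else [:: rho].

Lemma mem_reach k X :
  X \in reach k <-> exists2 w, (size w <= k)%N & X = conjw w rho.
Proof.
elim: k X => [|k IH] X /=; rewrite inE.
  by split=> [/eqP->|[[|o w] // _ ->]]; first by exists [::].
split=> [/orP[/eqP->|/allpairsP[[o Y] [_ /= /IH[w le_wk ->] ->]]]|].
- by exists [::].
- by exists (o :: w).
case=> [[|o w] le_wk ->]; first by rewrite eqxx.
apply/orP; right; apply/allpairsP; exists (o, conjw w rho); split => //.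
  by rewrite mem_enum.
by apply/IH; exists w.
Qed.

Definition reach_span (k : nat) : {vspace 'M[C]_n} := <<reach k>>%VS.

Lemma in_span_reach k X :
  in_span (inD U M rho k) X <-> X \in reach_span k.
Proof.
split=> [[m [f [c [Df ->]]]]|Wk_X].
  apply: memv_suml => i _; apply/memvZ/memv_span.
  by apply/mem_reach/inD_word.
rewrite (coord_span (X := in_tuple (reach k)) Wk_X).
exists (size (reach k)), (fun i => (reach k)`_i).
exists (fun i => coord (in_tuple (reach k)) i X); split => // i.
by apply/inD_word/mem_reach/mem_nth.
Qed.

Lemma reach_span_incr k : (reach_span k <= reach_span k.+1)%VS.
Proof.
apply/span_subvP => _ /mem_reach[w le_wk ->].
by apply/memv_span/mem_reach; exists w; first exact: leqW.
Qed.

(* Conjugation by a letter is linear, so it maps W_k into W_{k+1}. *)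
Lemma act_reach_span k o Y : Y \in reach_span k -> act o Y \in reach_span k.+1.
Proof.
move=> /(coord_span (X := in_tuple (reach k))) ->.
rewrite /act /= mulmx_sumr mulmx_suml; apply: memv_suml => i _.
rewrite -scalemxAr -scalemxAl; apply/memvZ/memv_span.
rewrite inE; apply/orP; right; apply/allpairsP.
by exists (o, (reach k)`_i); rewrite mem_enum mem_nth.
Qed.

Lemma reach_span_plateau k :
  reach_span k = reach_span k.+1 -> reach_span k.+1 = reach_span k.+2.
Proof.
move=> Wk; apply/eqP; rewrite eqEsubv reach_span_incr /=.
apply/span_subvP => X; rewrite inE => /orP[/eqP->|].
  by apply: memv_span; rewrite inE eqxx.
move=> /allpairsP[[o Y] [_ /= reach_Y ->]].
by apply: act_reach_span; rewrite Wk; apply: memv_span.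
Qed.

Lemma reach_span_bound m : (reach_span m <= reach_span (n ^ 2 - 1))%VS.
Proof.
have [rho0|rho_neq0] := eqVneq rho 0.
  apply/span_subvP => _ /mem_reach[w _ ->].
  by rewrite rho0 conjw0 mem0v.
have W0_neq0 : (0 < \dim (reach_span 0))%N.
  rewrite lt0n dimv_eq0; apply: contraNneq rho_neq0 => W0.
  by rewrite -memv0 -W0 memv_span ?mem_head.
apply: subv_trans (chain_bound reach_span_incr reach_span_plateau m) _.
apply: (chain_mono reach_span_incr).
by rewrite dimvf dim_matrix -mulnn; lia.
Qed.

End ReachableSpans.

Theorem propositionA2 (C : numClosedFieldType) (Sigma Gamma : finType) (n : nat)
  (U : Sigma -> 'M[C]_n) (M : Gamma -> 'M[C]_n)
  (hU : forall s, unitary_op (U s))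
  (hM : \sum_(g : Gamma) adjmx (M g) *m M g = 1%:M)
  (rho : 'M[C]_n) (hrho : hermitian_op rho) (m : nat) :
  forall X, in_span (inD U M rho m) X -> in_span (inD U M rho (n ^ 2 - 1)%N) X.
Proof.
move=> X /in_span_reach span_X; apply/in_span_reach.
exact: subvP (reach_span_bound U M rho m) X span_X.
Qed.
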